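(* Consider the real ODE system $$\frac{dp}{dt}=p\,(pR(v_c)-1),\qquad \frac{dv_c}{dt}=-\frac{p}{4}(1+v_c^2),\qquad R(v)=\frac12\left(\frac1v-v\right).$$ Let $0<v_c(0)<1$ and $0<\rho<R(v_c(0))$, and suppose $p(0)>\frac{1}{R(v_c(0))-\rho}$. Then for all $t>0$ in the existence interval, $v_c(t)<v_c(0)$, $p(t)>\frac{1}{R(v_c(t))-\rho}$, and $p(t)\ge\frac{p(0)}{1-\rho p(0)t}$. Consequently $p(t)\to\infty$ at some finite time $t_c\le\frac{1}{\rho p(0)}$, and the quantities $N_2(t)^2=2\pi p(t)^2\left(\frac{1}{v_c(t)}+v_c(t)\right)$ and $N_0(t)=2|p(t)|\max\!\left(\frac{1}{v_c(t)},v_c(t)\right)$ tend to $\infty$ as $t\to t_c^-$.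
   Context: This system is the form, with dissipation coefficient normalized to $\nu=1$, of the pole-dynamics ODEs for the generalized Constantin–Lax–Majda equation with $a=1/2$, $\sigma=0$, written in the variable $p=\omega_{-2,i}/(v_c(1-v_c^2))$. The quantities $N_2$ and $N_0$ equal the $L^2(-\pi,\pi)$ norm and the Wiener norm, respectively, of the associated periodic solution $\omega(\cdot,t)$. *)

From HB Require Import structures.
From mathcomp Require Import all_boot all_order all_algebra.
From mathcomp Require Import all_classical all_reals all_analysis.
Set Implicit Arguments. Unset Strict Implicit. Unset Printing Implicit Defensive.
Import Order.TTheory GRing.Theory Num.Theory numFieldNormedType.Exports.
Local Open Scope classical_set_scope.
Local Open Scope ring_scope.

Definition Rf {R : realType} (v : R) : R := (v^-1 - v) / 2.

(* (p, v) solves dp/dt = p (p R(v) - 1), dv/dt = -(p/4)(1+v^2) on [0, T):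
   v stays in the domain v <> 0 of R, p and v are right-continuous at 0,
   and differentiable with the prescribed derivatives on (0, T). *)
Definition is_solution {R : realType} (T : \bar R) (p v : R -> R) : Prop :=
  (forall t : R, 0 <= t -> (t%:E < T)%E -> v t != 0) /\
  (p x @[x --> 0^'+] --> p 0) /\ (v x @[x --> 0^'+] --> v 0) /\
  (forall t : R, 0 < t -> (t%:E < T)%E ->
     is_derive t 1 p (p t * (p t * Rf (v t) - 1)) /\
     is_derive t 1 v (- (p t / 4) * (1 + v t ^+ 2))).

Definition is_maximal_solution {R : realType} (T : \bar R) (p v : R -> R) : Prop :=
  (0 < T)%E /\ is_solution T p v /\
  forall (T' : \bar R) (p' v' : R -> R), (T < T')%E -> is_solution T' p' v' ->
    ~ (forall t : R, 0 <= t -> (t%:E < T)%E -> p' t = p t /\ v' t = v t).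

Definition N2sq {R : realType} (p v : R -> R) (t : R) : R :=
  2 * pi * p t ^+ 2 * ((v t)^-1 + v t).

Definition N0 {R : realType} (p v : R -> R) (t : R) : R :=
  2 * `|p t| * Num.max (v t)^-1 (v t).

From HB Require Import structures.
From mathcomp Require Import all_boot all_order all_algebra.
From mathcomp Require Import all_classical all_reals all_analysis.
From mathcomp Require Import ring lra.
Import Order.TTheory GRing.Theory Num.Theory numFieldNormedType.Exports.
Set Implicit Arguments. Unset Strict Implicit. Unset Printing Implicit Defensive.
Local Open Scope classical_set_scope.
Local Open Scope ring_scope.

(* Put [D := Rf v - rho - 1/p]. Since [D e^-t] increases, [D] stays positive,
   hence [1/p + rho t] decreases: this yields the lower bound on [p] and shows
   that the existence interval ends before [1 / (rho p(0))].
   For the blow-up, the system has the two first integrals [p mu(v) e^t] and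
   [kappa(v) - 4 p mu(v)], which give the solution in closed form. If [p] stayed
   bounded up to the endpoint [tc], then [mu(v) = I1 e^-t / p] would keep [v] away
   from [0], and the closed form would continue the solution past [tc],
   contradicting maximality. As [p] is increasing it tends to [+oo], and so do
   [N2sq] and [N0], which dominate [p]. *)

Section derivative_rules.
Context {R : realType}.
Implicit Types (f g : R -> R) (x a b : R).

Lemma is_derive1_continuous f x a : is_derive x 1 f a -> {for x, continuous f}.
Proof.
move=> fa; apply: differentiable_continuous; apply/derivable1_diffP.
exact: (@ex_derive _ _ _ _ _ _ _ fa).
Qed.

Lemma is_derive1_id x : is_derive x 1 (fun y : R => y) 1.
Proof. exact: is_derive_eq (@is_derive_id _ R x 1) _. Qed.

Lemma is_derive1_cst (c : R) x : is_derive x 1 (fun _ : R => c) 0.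
Proof. exact: is_derive_eq (@is_derive_cst _ R R c x 1) _. Qed.

Lemma is_derive1D f g x a b : is_derive x 1 f a -> is_derive x 1 g b ->
  is_derive x 1 (fun y => f y + g y) (a + b).
Proof. by move=> fa gb; exact: is_derive_eq (is_deriveD fa gb) _. Qed.

Lemma is_derive1N f x a : is_derive x 1 f a -> is_derive x 1 (fun y => - f y) (- a).
Proof. by move=> fa; exact: is_derive_eq (is_deriveN fa) _. Qed.

Lemma is_derive1B f g x a b : is_derive x 1 f a -> is_derive x 1 g b ->
  is_derive x 1 (fun y => f y - g y) (a - b).
Proof. by move=> fa gb; exact: is_derive1D fa (is_derive1N gb). Qed.

Lemma is_derive1M f g x a b : is_derive x 1 f a -> is_derive x 1 g b ->
  is_derive x 1 (fun y => f y * g y) (f x * b + g x * a).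
Proof. by move=> fa gb; exact: is_derive_eq (is_deriveM fa gb) _. Qed.

Lemma is_derive1V f x a : is_derive x 1 f a -> f x != 0 ->
  is_derive x 1 (fun y => (f y)^-1) (- a / f x ^+ 2).
Proof.
move=> fa fx0; apply: is_derive_eq (is_deriveV fx0 fa) _.
by rewrite -[_ *: _]/(_ * _); field.
Qed.

Lemma is_derive1_sqr f x a : is_derive x 1 f a ->
  is_derive x 1 (fun y => f y ^+ 2) (2 * f x * a).
Proof. by move=> fa; apply: is_derive_eq (is_derive1M fa fa) _; ring. Qed.

Lemma is_derive1_expRN x : is_derive x 1 (fun y : R => expR (- y)) (- expR (- x)).
Proof.
apply: is_derive_eq (is_derive1_comp (is_derive_expR _) (is_derive1N (is_derive1_id x))) _.
by rewrite mulrN1.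
Qed.

End derivative_rules.

Section derivative_on_interval.
Context {R : realType} {T : \bar R} {f df : R -> R}.
Hypotheses (f_derive : forall s, 0 < s -> (s%:E < T)%E -> is_derive s 1 f (df s))
  (f_cvg0 : f x @[x --> 0^'+] --> f 0).

Lemma continuous_within_subitv a b : 0 <= a -> a < b -> (b%:E < T)%E ->
  {within `[a, b], continuous f}.
Proof.
move=> a0 ab bT.
have fc s : 0 < s -> s <= b -> {for s, continuous f}.
  move=> s0 sb; apply: is_derive1_continuous (f_derive s0 _).
  by rewrite (le_lt_trans _ bT) // lee_fin.
apply/continuous_within_itvP => //; split.
- by move=> x; rewrite in_itv /= => /andP[ax xb]; apply: fc (ltW xb); exact: le_lt_trans ax.
- move: a0; rewrite le_eqVlt => /predU1P[<- //|a0].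
  exact: cvg_at_right_filter (fc _ a0 (ltW ab)).
- exact: cvg_at_left_filter (fc _ (le_lt_trans a0 ab) (lexx b)).
Qed.

Lemma MVT_subitv a b : 0 <= a -> a < b -> (b%:E < T)%E ->
  exists2 c, a < c < b & f b - f a = df c * (b - a).
Proof.
move=> a0 ab bT.
have fd x : x \in `]a, b[ -> is_derive x 1 f (df x).
  rewrite in_itv /= => /andP[ax xb]; apply: f_derive; first exact: le_lt_trans ax.
  by rewrite (lt_trans _ bT) // lte_fin.
have [c] := MVT ab fd (continuous_within_subitv a0 ab bT).
by rewrite in_itv /=; exists c.
Qed.

Lemma lt_of_derive_gt0 a b : 0 <= a -> a < b -> (b%:E < T)%E ->
  (forall c, a < c < b -> 0 < df c) -> f a < f b.
Proof.
move=> a0 ab bT df_gt0; have [c /df_gt0 dfc] := MVT_subitv a0 ab bT.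
by move=> /eqP; rewrite subr_eq => /eqP ->; rewrite ltrDr mulr_gt0 // subr_gt0.
Qed.

Lemma gt_of_derive_lt0 a b : 0 <= a -> a < b -> (b%:E < T)%E ->
  (forall c, a < c < b -> df c < 0) -> f b < f a.
Proof.
move=> a0 ab bT df_lt0; have [c /df_lt0 dfc] := MVT_subitv a0 ab bT.
by move=> /eqP; rewrite subr_eq => /eqP ->; rewrite gtrDr pmulr_llt0 // subr_gt0.
Qed.

Lemma eq_of_derive0 s : 0 <= s -> (s%:E < T)%E ->
  (forall c, 0 < c < s -> df c = 0) -> f s = f 0.
Proof.
rewrite le_eqVlt => /predU1P[<- //|s0] sT df0.
have [c /df0 ->] := MVT_subitv (lexx 0) s0 sT.
by rewrite mul0r => /eqP; rewrite subr_eq0 => /eqP.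
Qed.

Lemma gt0_of_neq0 s : 0 <= s -> (s%:E < T)%E ->
  (forall u, 0 <= u -> (u%:E < T)%E -> f u != 0) -> 0 < f 0 -> 0 < f s.
Proof.
rewrite le_eqVlt => /predU1P[<- //|s0] sT f_neq0 f0_gt0.
rewrite ltNge; apply/negP => fs_le0.
have [|c] := IVT (ltW s0) (continuous_within_subitv (lexx 0) s0 sT) (v := 0).
  by rewrite ge_min le_max fs_le0 (ltW f0_gt0) orbT.
rewrite in_itv /= => /andP[c0 cs] fc0.
have cT : (c%:E < T)%E by rewrite (le_lt_trans _ sT) // lee_fin.
by move: (f_neq0 c c0 cT); rewrite fc0 eqxx.
Qed.

End derivative_on_interval.

Lemma expRN_sub_le {R : realType} (s t : R) : 0 <= s -> s <= t ->
  expR (- s) - expR (- t) <= t - s.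
Proof.
move=> s0 st.
have eN : expR (- t) = expR (- s) * expR (- (t - s)).
  by rewrite -expRD; congr expR; ring.
have e1 : expR (- s) <= 1 by rewrite expR_le1 oppr_le0.
have e0 := expR_gt0 (- s); have eD := expR_ge1Dx (- (t - s)).
rewrite eN; nra.
Qed.

Section conserved_quantities.
Context {R : realType}.
Implicit Types x y : R.

(* Along solutions of the system, [p * mu v * expR t] and
   [kappa v - 4 * p * mu v] are conserved. *)
Definition mu x : R := x ^+ 2 / (1 + x ^+ 2) ^+ 2.
Definition kappa x : R := 2 * atan x - 2 * x * (1 - x ^+ 2) / (1 + x ^+ 2) ^+ 2.

Lemma sqr1_gt0 x : 0 < 1 + x ^+ 2.
Proof. by rewrite ltr_pwDl // sqr_ge0. Qed.

Lemma sqr1_neq0 x : 1 + x ^+ 2 != 0.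
Proof. by rewrite gt_eqF // sqr1_gt0. Qed.

Lemma is_derive1_sqr1 x : is_derive x 1 (fun y : R => 1 + y ^+ 2) (2 * x).
Proof.
by apply: is_derive_eq (is_derive1D (is_derive1_cst 1 x) (is_derive1_sqr (is_derive1_id x))) _; ring.
Qed.

Lemma is_derive1_inv_sqr1_sqr x :
  is_derive x 1 (fun y : R => ((1 + y ^+ 2) ^+ 2)^-1) (- 4 * x / (1 + x ^+ 2) ^+ 3).
Proof.
apply: is_derive_eq (is_derive1V (is_derive1_sqr (is_derive1_sqr1 x)) (expf_neq0 2 (sqr1_neq0 x))) _.
by field; rewrite ?sqr1_neq0.
Qed.

Lemma mu_derive x : is_derive x 1 mu (2 * x * (1 - x ^+ 2) / (1 + x ^+ 2) ^+ 3).
Proof.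
apply: is_derive_eq (is_derive1M (is_derive1_sqr (is_derive1_id x)) (is_derive1_inv_sqr1_sqr x)) _.
by field; rewrite ?sqr1_neq0.
Qed.

Lemma kappa_derive x : is_derive x 1 kappa (16 * x ^+ 2 / (1 + x ^+ 2) ^+ 3).
Proof.
have d2x := is_derive1M (is_derive1_cst 2 x) (is_derive1_id x).
apply: is_derive_eq (is_derive1B (is_derive1M (is_derive1_cst 2 x) (is_derive1_atan x))
  (is_derive1M (is_derive1M d2x (is_derive1B (is_derive1_cst 1 x) (is_derive1_sqr (is_derive1_id x))))
     (is_derive1_inv_sqr1_sqr x))) _.
by field; rewrite ?sqr1_neq0.
Qed.

Lemma Rf_derive x : x != 0 -> is_derive x 1 Rf (- (1 + x ^+ 2) / (2 * x ^+ 2)).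
Proof.
move=> x0.
apply: is_derive_eq (is_derive1M (is_derive1B (is_derive1V (is_derive1_id x) x0) (is_derive1_id x))
  (is_derive1_cst 2^-1 x)) _.
by field.
Qed.

Lemma mu_gt0 x : x != 0 -> 0 < mu x.
Proof.
move=> x0; rewrite /mu divr_gt0 //; last by rewrite exprn_gt0 // sqr1_gt0.
by rewrite lt_neqAle sqr_ge0 andbT eq_sym sqrf_eq0.
Qed.

Lemma mu_le x : 0 < x -> x < 1 -> mu x <= x.
Proof.
move=> x0 x1; rewrite /mu ler_pdivrMr ?exprn_gt0 ?sqr1_gt0 //.
have h1 : 1 <= (1 + x ^+ 2) ^+ 2.
  by rewrite expr_ge1 // ?lerDl ?sqr_ge0 // addr_ge0 ?sqr_ge0.
have h2 : x ^+ 2 <= x by rewrite expr2; nra.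
nra.
Qed.

Lemma kappa0 : kappa 0 = 0.
Proof. by rewrite /kappa atan0 !(mulr0, mul0r) subrr. Qed.

Lemma kappa_continuous : continuous kappa.
Proof. by move=> x; exact: is_derive1_continuous (kappa_derive x). Qed.

Lemma kappa_lt x y : 0 <= x -> x < y -> kappa x < kappa y.
Proof.
move=> x0 xy.
have kc : {within `[x, y], continuous kappa}.
  by apply: continuous_subspaceT => c; exact: kappa_continuous.
have [c] := MVT xy (fun c _ => kappa_derive c) kc.
rewrite in_itv /= => /andP[xc _] /eqP; rewrite subr_eq => /eqP ->.
have c0 : 0 < c by exact: le_lt_trans xc.
by rewrite ltrDr mulr_gt0 ?subr_gt0 // divr_gt0 ?exprn_gt0 ?sqr1_gt0 ?mulr_gt0.
Qed.

Lemma kappa_le x y : 0 <= x -> x <= y -> kappa x <= kappa y.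
Proof.
move=> x0; rewrite le_eqVlt => /predU1P[-> //|xy].
exact/ltW/kappa_lt.
Qed.

Lemma kappa_inj x y : 0 <= x -> 0 <= y -> kappa x = kappa y -> x = y.
Proof.
move=> x0 y0 e; case: (ltgtP x y) => // xy.
- by have := kappa_lt x0 xy; rewrite e ltxx.
- by have := kappa_lt y0 xy; rewrite e ltxx.
Qed.

(* Junk value [0] when [y] is not a value of [kappa] on [(0, +oo)]. *)
Definition kappa_inv y : R := xget 0 [set x | 0 < x /\ kappa x = y].

Lemma kappa_invP y : (exists x, 0 < x /\ kappa x = y) ->
  0 < kappa_inv y /\ kappa (kappa_inv y) = y.
Proof. by move=> e; have := xgetPex 0 e. Qed.

Lemma kappaK x : 0 < x -> kappa_inv (kappa x) = x.
Proof.
move=> x0; have [? ?] := kappa_invP (ex_intro _ x (conj x0 erefl)).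
by apply: kappa_inj; rewrite ?ltW.
Qed.

Lemma kappa_inv_derive x : 0 < x ->
  is_derive (kappa x) 1 kappa_inv ((16 * x ^+ 2 / (1 + x ^+ 2) ^+ 3)^-1).
Proof.
move=> x0.
have kK : {near x, cancel kappa kappa_inv}.
  by near=> z; apply: kappaK; near: z; exact: lt_nbhsr x0.
have kc : {near x, continuous kappa} by near=> z; exact: kappa_continuous.
apply: is_derive_inverse kK kc (kappa_derive x) _.
by rewrite gt_eqF // divr_gt0 ?exprn_gt0 ?sqr1_gt0 ?mulr_gt0.
Unshelve. all: by end_near. Qed.

End conserved_quantities.

Section norm_bounds.
Context {R : realType}.
Implicit Types (p v : R -> R) (t : R).

Lemma le_N2sq p v t : 1 <= p t -> 0 < v t -> v t < 1 -> p t <= N2sq p v t.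
Proof.
move=> p1 v0 v1; rewrite /N2sq -mulrA.
have vi1 : 1 <= (v t)^-1 by rewrite invf_ge1 // ltW.
have w1 : 1 <= (v t)^-1 + v t by lra.
have pi1 : 1 <= 2 * (pi : R) by have := @pi_ge2 R; lra.
have p2 : p t <= p t ^+ 2 by rewrite expr2 ler_peMr // (le_trans ler01).
have p2w : p t ^+ 2 <= p t ^+ 2 * ((v t)^-1 + v t) by rewrite ler_peMr ?sqr_ge0.
apply: le_trans p2 (le_trans p2w _).
by rewrite ler_peMl // mulr_ge0 ?sqr_ge0 // (le_trans ler01).
Qed.

Lemma le_N0 p v t : 0 < p t -> 0 < v t -> v t < 1 -> p t <= N0 p v t.
Proof.
move=> p0 v0 v1; rewrite /N0 gtr0_norm //.
have m1 : 1 <= Num.max (v t)^-1 (v t) by rewrite le_max invf_ge1 // ltW.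
nra.
Qed.

End norm_bounds.

Section solution.
Context {R : realType} {T : \bar R} {p v : R -> R} {rho : R}.
Hypotheses (sol : is_solution T p v) (v0_gt0 : 0 < v 0) (v0_lt1 : v 0 < 1)
  (rho_gt0 : 0 < rho) (rho_lt : rho < Rf (v 0)) (p0_gt : (Rf (v 0) - rho)^-1 < p 0).

Lemma v_neq0 t : 0 <= t -> (t%:E < T)%E -> v t != 0.
Proof. by case: sol => + _; apply. Qed.

Lemma p_cvg0 : p x @[x --> 0^'+] --> p 0.
Proof. by case: sol => _ []. Qed.

Lemma v_cvg0 : v x @[x --> 0^'+] --> v 0.
Proof. by case: sol => _ [_ []]. Qed.

Lemma p_derive t : 0 < t -> (t%:E < T)%E ->
  is_derive t 1 p (p t * (p t * Rf (v t) - 1)).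
Proof. by case: sol => _ [_ [_ d]] t0 tT; case: (d t t0 tT). Qed.

Lemma v_derive t : 0 < t -> (t%:E < T)%E ->
  is_derive t 1 v (- (p t / 4) * (1 + v t ^+ 2)).
Proof. by case: sol => _ [_ [_ d]] t0 tT; case: (d t t0 tT). Qed.

Lemma before_T s t : s <= t -> (t%:E < T)%E -> (s%:E < T)%E.
Proof. by move=> st; apply: le_lt_trans; rewrite lee_fin. Qed.

Lemma cvg0_comp (g : R -> R) : {for v 0, continuous g} -> g (v x) @[x --> 0^'+] --> g (v 0).
Proof. by move=> gc; exact: continuous_cvg gc v_cvg0. Qed.

Lemma p0_gt0 : 0 < p 0.
Proof. by apply: lt_trans p0_gt; rewrite invr_gt0 subr_gt0. Qed.

Definition I1 := p 0 * mu (v 0).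

Lemma I1_gt0 : 0 < I1.
Proof. by rewrite mulr_gt0 ?p0_gt0 // mu_gt0 // gt_eqF. Qed.

Lemma first_integral s : 0 <= s -> (s%:E < T)%E -> p s * mu (v s) * expR s = I1.
Proof.
move=> s0 sT.
have fd u : 0 < u -> (u%:E < T)%E ->
    is_derive u 1 (fun t => p t * mu (v t) * expR t) 0.
  move=> u0 uT; have vu := v_neq0 (ltW u0) uT.
  apply: is_derive_eq (is_derive1M (is_derive1M (p_derive u0 uT)
    (is_derive1_comp (mu_derive (v u)) (v_derive u0 uT))) (is_derive_expR u)) _.
  by rewrite /= /mu /Rf; field; rewrite vu sqr1_neq0.
have fc : p x * mu (v x) * expR x @[x --> 0^'+] --> p 0 * mu (v 0) * expR 0.
  apply: cvgM; first exact: cvgM p_cvg0 (cvg0_comp (is_derive1_continuous (mu_derive _))).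
  exact: cvg_at_right_filter (is_derive1_continuous (is_derive_expR 0)).
by rewrite (eq_of_derive0 fd fc s0 sT) // expR0 mulr1.
Qed.

Lemma p_gt0 s : 0 <= s -> (s%:E < T)%E -> 0 < p s.
Proof.
move=> s0 sT; have := I1_gt0; rewrite -(first_integral s0 sT) -mulrA pmulr_lgt0 //.
by rewrite mulr_gt0 ?expR_gt0 // mu_gt0 // v_neq0.
Qed.

Lemma v_lt_v0 s : 0 < s -> (s%:E < T)%E -> v s < v 0.
Proof.
move=> s0 sT.
apply: (gt_of_derive_lt0 v_derive v_cvg0 (lexx 0) s0 sT).
move=> c /andP[c0 cs]; rewrite mulNr oppr_lt0 mulr_gt0 ?sqr1_gt0 // divr_gt0 //.
by rewrite p_gt0 ?(ltW c0) // (before_T (ltW cs)).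
Qed.

Lemma v_gt0 s : 0 <= s -> (s%:E < T)%E -> 0 < v s.
Proof. by move=> s0 sT; exact: (gt0_of_neq0 v_derive v_cvg0 s0 sT v_neq0 v0_gt0). Qed.

Lemma v_lt1 s : 0 <= s -> (s%:E < T)%E -> v s < 1.
Proof.
rewrite le_eqVlt => /predU1P[<- //|s0] sT.
exact: lt_trans (v_lt_v0 s0 sT) v0_lt1.
Qed.

(* With [D := Rf v - rho - 1/p] one computes [D' = D + rho + p (1 + v^2)^2 / (8 v^2)],
   so [D * expR (- t)] is increasing. *)
Lemma p_inv_lt s : 0 <= s -> (s%:E < T)%E -> (p s)^-1 < Rf (v s) - rho.
Proof.
rewrite le_eqVlt => /predU1P[<- _|s0 sT].
  by rewrite -[X in _ < X]invrK ltf_pV2 ?posrE ?p0_gt0 ?invr_gt0 ?subr_gt0.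
pose D u := (Rf (v u) - rho - (p u)^-1) * expR (- u).
have Dd u : 0 < u -> (u%:E < T)%E -> is_derive u 1 D
    (expR (- u) * (p u * (1 + v u ^+ 2) ^+ 2 / (8 * v u ^+ 2) + rho)).
  move=> u0 uT; have vu := v_neq0 (ltW u0) uT.
  have pu : p u != 0 by rewrite gt_eqF // p_gt0 // ltW.
  apply: is_derive_eq (is_derive1M (is_derive1B (is_derive1B
    (is_derive1_comp (Rf_derive vu) (v_derive u0 uT)) (is_derive1_cst rho u))
    (is_derive1V (p_derive u0 uT) pu)) (is_derive1_expRN u)) _.
  by rewrite /= /Rf; field; rewrite vu pu.
have Dc : D x @[x --> 0^'+] --> D 0.
  have Rfc : Rf (v x) @[x --> 0^'+] --> Rf (v 0).
    exact: cvg0_comp (is_derive1_continuous (Rf_derive (lt0r_neq0 v0_gt0))).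
  have pVc : (p x)^-1 @[x --> 0^'+] --> (p 0)^-1 by exact: cvgV (lt0r_neq0 p0_gt0) p_cvg0.
  have eNc : expR (- x) @[x --> 0^'+] --> expR (- 0 : R).
    exact: cvg_at_right_filter (is_derive1_continuous (is_derive1_expRN 0)).
  by rewrite /D; exact: cvgM (cvgB (cvgB Rfc (cvg_cst rho)) pVc) eNc.
have D0 : 0 < D 0.
  rewrite /D oppr0 expR0 mulr1 subr_gt0.
  by rewrite -[X in _ < X]invrK ltf_pV2 ?posrE ?p0_gt0 ?invr_gt0 ?subr_gt0.
have : D 0 < D s.
  apply: (lt_of_derive_gt0 Dd Dc (lexx 0) s0 sT) => c /andP[c0 cs].
  have cT := before_T (ltW cs) sT.
  have pc := p_gt0 (ltW c0) cT.
  rewrite mulr_gt0 ?expR_gt0 // ltr_pwDr // divr_ge0 //.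
    by rewrite mulr_ge0 ?sqr_ge0 ?ltW.
  by rewrite mulr_ge0 ?sqr_ge0.
by rewrite /D => /(lt_trans D0); rewrite pmulr_lgt0 ?expR_gt0 // subr_gt0.
Qed.

Lemma p_inv_addr_lt s : 0 < s -> (s%:E < T)%E -> (p s)^-1 + rho * s < (p 0)^-1.
Proof.
move=> s0 sT.
have fd u : 0 < u -> (u%:E < T)%E ->
    is_derive u 1 (fun t => (p t)^-1 + rho * t) (- (Rf (v u) - rho - (p u)^-1)).
  move=> u0 uT; have pu : p u != 0 by rewrite gt_eqF // p_gt0 // ltW.
  apply: is_derive_eq (is_derive1D (is_derive1V (p_derive u0 uT) pu)
    (is_derive1M (is_derive1_cst rho u) (is_derive1_id u))) _.
  by field.
have fc : (p x)^-1 + rho * x @[x --> 0^'+] --> (p 0)^-1 + rho * 0.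
  apply: cvgD; first exact: cvgV (lt0r_neq0 p0_gt0) p_cvg0.
  exact: cvgM (cvg_cst _) (cvg_at_right_filter cvg_id).
have := gt_of_derive_lt0 fd fc (lexx 0) s0 sT.
rewrite mulr0 addr0; apply=> c /andP[c0 cs].
by rewrite oppr_lt0 subr_gt0 p_inv_lt // (ltW c0, before_T (ltW cs) sT).
Qed.

Lemma pointwise_bounds s : 0 < s -> (s%:E < T)%E ->
  [/\ v s < v 0, (Rf (v s) - rho)^-1 < p s & p 0 / (1 - rho * p 0 * s) <= p s].
Proof.
move=> s0 sT.
have ps := p_gt0 (ltW s0) sT.
have ips : 0 < (p s)^-1 by rewrite invr_gt0.
have D := p_inv_lt (ltW s0) sT.
have B := p_inv_addr_lt s0 sT.
split; first exact: v_lt_v0.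
  by rewrite -[p s]invrK ltf_pV2 ?posrE ?invr_gt0 // (lt_trans ips).
have w0 : 0 < (p 0)^-1 - rho * s by lra.
have -> : p 0 / (1 - rho * p 0 * s) = ((p 0)^-1 - rho * s)^-1.
  have p0n := lt0r_neq0 p0_gt0.
  have -> : 1 - rho * p 0 * s = p 0 * ((p 0)^-1 - rho * s) by field.
  by rewrite invfM mulVKf.
by rewrite -[p s]invrK lef_pV2 ?posrE ?invr_gt0 //; lra.
Qed.

Lemma lt_inv_rho_p0 s : 0 < s -> (s%:E < T)%E -> s < (rho * p 0)^-1.
Proof.
move=> s0 sT; have B := p_inv_addr_lt s0 sT.
have ips : 0 < (p s)^-1 by rewrite invr_gt0 p_gt0 // ltW.
rewrite invfM -[s](mulKf (lt0r_neq0 rho_gt0)) ltr_pM2l ?invr_gt0 //.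
lra.
Qed.

Lemma existence_time_finite : (0 < T)%E ->
  exists tc, [/\ T = tc%:E, 0 < tc & tc <= (rho * p 0)^-1].
Proof.
have b_gt0 : 0 < (rho * p 0)^-1 by rewrite invr_gt0 mulr_gt0 // p0_gt0.
case: T lt_inv_rho_p0 => [tc| |] //= bound tc_gt0; last first.
  by have := bound _ b_gt0 (ltry _); rewrite ltxx.
exists tc; split; rewrite -?lte_fin // leNgt; apply/negP => tc_gt.
by have := bound _ b_gt0; rewrite lte_fin ltxx => /(_ tc_gt).
Qed.

Lemma p_lt s t : 0 < s -> s < t -> (t%:E < T)%E -> p s < p t.
Proof.
move=> s0 st tT; apply: (lt_of_derive_gt0 p_derive p_cvg0 (ltW s0) st tT).
move=> c /andP[sc ct]; have c0 := lt_trans s0 sc.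
have cT := before_T (ltW ct) tT.
have pc := p_gt0 (ltW c0) cT; have D := p_inv_lt (ltW c0) cT.
have -> : p c * Rf (v c) - 1 = p c * (Rf (v c) - rho - (p c)^-1) + p c * rho.
  by field; exact: lt0r_neq0.
by rewrite mulr_gt0 // addr_gt0 ?mulr_gt0 // subr_gt0.
Qed.

Lemma p_mu_v s : 0 <= s -> (s%:E < T)%E -> p s * mu (v s) = I1 * expR (- s).
Proof.
move=> s0 sT; rewrite -(first_integral s0 sT) -mulrA -expRD subrr expR0.
by rewrite mulr1.
Qed.

Lemma second_integral s : 0 <= s -> (s%:E < T)%E ->
  kappa (v s) - 4 * p s * mu (v s) = kappa (v 0) - 4 * I1.
Proof.
move=> s0 sT.
have fd u : 0 < u -> (u%:E < T)%E ->
    is_derive u 1 (fun t => kappa (v t) - 4 * p t * mu (v t)) 0.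
  move=> u0 uT; have vu := v_neq0 (ltW u0) uT.
  have vd := v_derive u0 uT.
  apply: is_derive_eq (is_derive1B (is_derive1_comp (kappa_derive (v u)) vd)
    (is_derive1M (is_derive1M (is_derive1_cst 4 u) (p_derive u0 uT))
       (is_derive1_comp (mu_derive (v u)) vd))) _.
  by rewrite /= /mu /Rf; field; rewrite vu sqr1_neq0.
have fc : kappa (v x) - 4 * p x * mu (v x) @[x --> 0^'+] -->
    kappa (v 0) - 4 * p 0 * mu (v 0).
  have kc : kappa (v x) @[x --> 0^'+] --> kappa (v 0).
    by apply: cvg0_comp; exact: kappa_continuous.
  have mc := cvg0_comp (is_derive1_continuous (mu_derive (v 0))).
  exact: cvgB kc (cvgM (cvgM (cvg_cst (4 : R)) p_cvg0) mc).
by rewrite (eq_of_derive0 fd fc s0 sT) // -mulrA.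
Qed.

Definition kappa_sol (t : R) : R := kappa (v 0) - 4 * I1 * (1 - expR (- t)).

Lemma kappa_v s : 0 <= s -> (s%:E < T)%E -> kappa (v s) = kappa_sol s.
Proof.
move=> s0 sT; have := second_integral s0 sT.
by rewrite -mulrA p_mu_v // /kappa_sol; lra.
Qed.

(* The closed form given by the two first integrals; it solves the system
   wherever [kappa_sol t] is a value of [kappa] on [(0, +oo)]. *)
Definition vext (t : R) : R := kappa_inv (kappa_sol t).
Definition pext (t : R) : R := I1 * expR (- t) / mu (vext t).

Lemma vext_eq s : 0 <= s -> (s%:E < T)%E -> vext s = v s.
Proof. by move=> s0 sT; rewrite /vext -kappa_v // kappaK // v_gt0. Qed.

Lemma pext_eq s : 0 <= s -> (s%:E < T)%E -> pext s = p s.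
Proof.
move=> s0 sT; rewrite /pext vext_eq // -p_mu_v // mulfK //.
by rewrite gt_eqF // mu_gt0 // v_neq0.
Qed.

Lemma kappa_sol_derive (t : R) : is_derive t 1 kappa_sol (- (4 * I1 * expR (- t))).
Proof.
apply: is_derive_eq (is_derive1B (is_derive1_cst (kappa (v 0)) t)
  (is_derive1M (is_derive1_cst (4 * I1) t)
     (is_derive1B (is_derive1_cst 1 t) (is_derive1_expRN t)))) _.
by ring.
Qed.

Lemma vext_derive t : 0 < vext t -> kappa (vext t) = kappa_sol t ->
  is_derive t 1 vext (- (pext t / 4) * (1 + vext t ^+ 2)).
Proof.
move=> x0 kx; have := kappa_inv_derive x0; rewrite kx => kid.
apply: is_derive_eq (is_derive1_comp kid (kappa_sol_derive t)) _.
by rewrite /pext /mu; field; rewrite sqr1_neq0 lt0r_neq0.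
Qed.

Lemma pext_derive t : 0 < vext t -> kappa (vext t) = kappa_sol t ->
  is_derive t 1 pext (pext t * (pext t * Rf (vext t) - 1)).
Proof.
move=> x0 kx; have mx := lt0r_neq0 (mu_gt0 (lt0r_neq0 x0)).
apply: is_derive_eq (is_derive1M (is_derive1M (is_derive1_cst I1 t) (is_derive1_expRN t))
  (is_derive1V (is_derive1_comp (mu_derive (vext t)) (vext_derive x0 kx)) mx)) _.
by rewrite /= /pext /mu /Rf; field; rewrite sqr1_neq0 lt0r_neq0.
Qed.

Lemma kappa_sol_le s t : s <= t -> kappa_sol t <= kappa_sol s.
Proof.
move=> st; have I4 : 0 < 4 * I1 by rewrite mulr_gt0 // I1_gt0.
by rewrite /kappa_sol lerD2l lerN2 ler_pM2l // lerD2l lerN2 ler_expR lerN2.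
Qed.

(* If [p <= M] on [(0, tc)], then [v >= vlow] there, and [eps] is small enough
   for [kappa_sol], which decreases at rate at most [4 * I1], to stay positive
   up to [text > tc]. *)
Section bounded_continuation.
Variables (tc M : R).
Hypotheses (T_eq : T = tc%:E) (tc_gt0 : 0 < tc)
  (p_le : forall s, 0 < s -> s < tc -> p s <= M).

Let lt_T s : s < tc -> (s%:E < T)%E.
Proof. by rewrite T_eq lte_fin. Qed.

Lemma M_gt0 : 0 < M.
Proof.
have tc2 : tc / 2 < tc by rewrite ltr_pdivrMr // ltr_pMr // ltr1n.
have tc2_gt0 : 0 < tc / 2 by rewrite divr_gt0.
by apply: lt_le_trans (p_le tc2_gt0 tc2); rewrite p_gt0 ?lt_T ?ltW.
Qed.

Definition vlow := I1 * expR (- tc) / M.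

Lemma vlow_gt0 : 0 < vlow.
Proof. by rewrite divr_gt0 ?M_gt0 // mulr_gt0 ?I1_gt0 ?expR_gt0. Qed.

Lemma vlow_le_v s : 0 < s -> s < tc -> vlow <= v s.
Proof.
move=> s0 stc; have sT := lt_T stc; have ps := p_gt0 (ltW s0) sT.
apply: le_trans (mu_le (v_gt0 (ltW s0) sT) (v_lt1 (ltW s0) sT)).
have -> : mu (v s) = I1 * expR (- s) / p s.
  by rewrite -p_mu_v ?ltW // mulrC mulKf // lt0r_neq0.
apply: ler_pM.
- by rewrite mulr_ge0 ?expR_ge0 // ltW // I1_gt0.
- by rewrite invr_ge0 ltW // M_gt0.
- by rewrite ler_pM2l ?I1_gt0 // ler_expR lerN2 ltW.
- by rewrite lef_pV2 ?posrE ?M_gt0 // p_le.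
Qed.

Definition eps := Num.min tc (kappa vlow / (4 * I1)).
Definition text := tc + eps / 4.

Lemma kappa_vlow_gt0 : 0 < kappa vlow.
Proof. by rewrite -kappa0 kappa_lt // vlow_gt0. Qed.

Lemma eps_gt0 : 0 < eps.
Proof.
have I4 : 0 < 4 * I1 by rewrite mulr_gt0 // I1_gt0.
by rewrite lt_min tc_gt0 divr_gt0 // kappa_vlow_gt0.
Qed.

Lemma tc_lt_text : tc < text.
Proof. by rewrite ltrDl divr_gt0 // eps_gt0. Qed.

Lemma kappa_sol_text_gt0 : 0 < kappa_sol text.
Proof.
have eps_gt0 := eps_gt0.
have eps_le : eps <= tc by rewrite ge_min lexx.
have I1_4 : 0 < 4 * I1 by rewrite mulr_gt0 ?I1_gt0.
have I1eps : 4 * I1 * eps <= kappa vlow.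
  have : eps <= kappa vlow / (4 * I1) by rewrite ge_min lexx orbT.
  by rewrite ler_pdivlMr // mulrC.
pose s := tc - eps / 4.
have s0 : 0 < s by rewrite /s; lra.
have kv : kappa vlow <= kappa_sol s.
  rewrite -kappa_v ?(ltW s0) ?lt_T //; last by rewrite /s; lra.
  by apply: kappa_le; rewrite ?(ltW vlow_gt0) // vlow_le_v // /s; lra.
have s_text : s <= text by rewrite /text /s; lra.
have e : kappa_sol text = kappa_sol s - 4 * I1 * (expR (- s) - expR (- text)).
  by rewrite /kappa_sol; ring.
have : 4 * I1 * (expR (- s) - expR (- text)) <= 4 * I1 * (eps / 2).
  rewrite ler_pM2l // (le_trans (expRN_sub_le (ltW s0) s_text)) //.
  by rewrite /text /s; lra.
by rewrite e; nra.
Qed.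

Lemma kappa_sol_range t : 0 <= t -> t <= text ->
  exists x, 0 < x /\ kappa x = kappa_sol t.
Proof.
move=> t0 tt.
have kt : 0 < kappa_sol t by apply: lt_le_trans kappa_sol_text_gt0 (kappa_sol_le tt).
have k0 : kappa_sol t <= kappa (v 0).
  by have := kappa_sol_le t0; rewrite /kappa_sol oppr0 expR0 subrr !mulr0 subr0.
have kc : {within `[0, v 0], continuous kappa}.
  by apply: continuous_subspaceT; exact: kappa_continuous.
have [|x] := IVT (ltW v0_gt0) kc (v := kappa_sol t).
  by rewrite kappa0 ge_min le_max k0 (ltW kt) orbT.
rewrite in_itv /= => /andP[x0 _] kx; exists x; split => //.
rewrite lt_neqAle x0 andbT; apply: contraTneq kt => x_eq0.
by rewrite -kx -x_eq0 kappa0 ltxx.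
Qed.

Lemma continuation : is_solution text%:E pext vext.
Proof.
have near0 (f g : R -> R) : (forall s, 0 <= s -> (s%:E < T)%E -> f s = g s) ->
    g x @[x --> 0^'+] --> g 0 -> f x @[x --> 0^'+] --> f 0.
  move=> fg gc; rewrite fg ?lt_T //; apply: cvg_trans gc; apply: near_eq_cvg.
  near=> x; have x0 : 0 <= x by near: x; exact: nbhs_right_ge.
  by rewrite fg // lt_T //; near: x; exact: nbhs_right_lt.
split.
  move=> t t0; rewrite lte_fin => tt.
  by have [/lt0r_neq0] := kappa_invP (kappa_sol_range t0 (ltW tt)).
split; first exact: near0 pext_eq p_cvg0.
split; first exact: near0 vext_eq v_cvg0.
move=> t t0; rewrite lte_fin => tt.
have [x0 kx] := kappa_invP (kappa_sol_range (ltW t0) (ltW tt)).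
by split; [exact: pext_derive | exact: vext_derive].
Unshelve. all: by end_near.
Qed.

End bounded_continuation.

Lemma p_unbounded tc M : is_maximal_solution T p v -> T = tc%:E -> 0 < tc ->
  exists2 s, 0 < s < tc & M < p s.
Proof.
move=> [_ [_ maxT]] T_eq tc_gt0; apply: contrapT => p_bnd.
have p_le s : 0 < s -> s < tc -> p s <= M.
  move=> s0 stc; rewrite leNgt; apply/negP => Mp.
  by apply: p_bnd; exists s; rewrite ?s0.
apply: maxT (continuation T_eq tc_gt0 p_le) _.
  by rewrite T_eq lte_fin tc_lt_text.
move=> t t0 tT; split; [exact: pext_eq | exact: vext_eq].
Qed.

Lemma p_cvgy tc : is_maximal_solution T p v -> T = tc%:E -> 0 < tc ->
  p t @[t --> tc^'-] --> +oo.
Proof.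
move=> maxT T_eq tc_gt0; apply/cvgryPgt => M.
have [s /andP[s0 stc] Mps] := p_unbounded M maxT T_eq tc_gt0.
near=> t; apply: lt_trans Mps (p_lt s0 _ _).
  by near: t; exact: nbhs_left_gt.
by rewrite T_eq lte_fin; near: t; exact: nbhs_left_lt.
Unshelve. all: by end_near. Qed.

Lemma blowup : is_maximal_solution T p v ->
  exists tc : R, [/\ T = tc%:E, tc <= (rho * p 0)^-1,
     p t @[t --> tc^'-] --> +oo,
     N2sq p v t @[t --> tc^'-] --> +oo &
     N0 p v t @[t --> tc^'-] --> +oo].
Proof.
move=> maxT; have [tc [T_eq tc_gt0 tc_le]] := existence_time_finite maxT.1.
have p_cvg := p_cvgy maxT T_eq tc_gt0.
have pv_near : \forall t \near tc^'-, [/\ 1 <= p t, 0 < v t & v t < 1].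
  near=> t.
  have t0 : 0 < t by near: t; exact: nbhs_left_gt.
  have tT : (t%:E < T)%E by rewrite T_eq lte_fin; near: t; exact: nbhs_left_lt.
  split; [near: t; exact: cvgry_ge | exact: v_gt0 (ltW t0) tT | exact: v_lt1 (ltW t0) tT].
exists tc; split => //; apply: ger_cvgy p_cvg; move: pv_near; apply: filterS.
  by move=> t [p1 vt0 vt1]; exact: le_N2sq.
by move=> t [p1 vt0 vt1]; exact: le_N0 (lt_le_trans ltr01 p1) vt0 vt1.
Unshelve. all: by end_near. Qed.
End solution.

Theorem theoremA2 (R : realType) (T : \bar R) (p v : R -> R) (rho : R) :
  is_maximal_solution T p v ->
  0 < v 0 < 1 -> 0 < rho < Rf (v 0) -> (Rf (v 0) - rho)^-1 < p 0 ->
  (forall t : R, 0 < t -> (t%:E < T)%E ->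
     [/\ v t < v 0, (Rf (v t) - rho)^-1 < p t &
         p 0 / (1 - rho * p 0 * t) <= p t]) /\
  exists tc : R, [/\ T = tc%:E, tc <= (rho * p 0)^-1,
     p t @[t --> tc^'-] --> +oo,
     N2sq p v t @[t --> tc^'-] --> +oo &
     N0 p v t @[t --> tc^'-] --> +oo].
Proof.
move=> maxT /andP[v0_gt0 v0_lt1] /andP[rho_gt0 rho_lt] p0_gt.
have sol := maxT.2.1.
split=> [t t0 tT|].
  exact: (pointwise_bounds sol v0_gt0 rho_gt0 rho_lt p0_gt t0 tT).
exact: blowup sol v0_gt0 v0_lt1 rho_gt0 rho_lt p0_gt maxT.
Qed.
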